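(* For all $\boldsymbol\mu,\boldsymbol\mu'\in\mathcal P(\mathcal X\times[K])$ and every collection $\boldsymbol\pi=(\pi_k)_{k\in[K]}$ of decision rules $\pi_k:\mathcal X\times\mathcal P(\mathcal X)\to\mathcal P(\mathcal U)$ with $|\pi_k(x,\mu_1)-\pi_k(x,\mu_2)|_1\le L_Q|\mu_1-\mu_2|_1$ for all $x,k,\mu_1,\mu_2$: (a) $|\nu^{\mathrm{MF}}(\boldsymbol\mu,\boldsymbol\pi)[\mathcal U]-\nu^{\mathrm{MF}}(\boldsymbol\mu',\boldsymbol\pi)[\mathcal U]|_1\le|\nu^{\mathrm{MF}}(\boldsymbol\mu,\boldsymbol\pi)-\nu^{\mathrm{MF}}(\boldsymbol\mu',\boldsymbol\pi)|_1\le|\boldsymbol\mu-\boldsymbol\mu'|_1+L_Q|\boldsymbol\mu[\mathcal X]-\boldsymbol\mu'[\mathcal X]|_1$; (b) $\sum_{k\in[K]}|r_k^{\mathrm{MF}}(\boldsymbol\mu,\boldsymbol\pi)-r_k^{\mathrm{MF}}(\boldsymbol\mu',\boldsymbol\pi)|\le S_R'|\boldsymbol\mu-\boldsymbol\mu'|_1+S_R''|\boldsymbol\mu[\mathcal X]-\boldsymbol\mu'[\mathcal X]|_1$; (c) $|P^{\mathrm{MF}}(\boldsymbol\mu,\boldsymbol\pi)[\mathcal X]-P^{\mathrm{MF}}(\boldsymbol\mu',\boldsymbol\pi)[\mathcal X]|_1\le|P^{\mathrm{MF}}(\boldsymbol\mu,\boldsymbol\pi)-P^{\mathrm{MF}}(\boldsymbol\mu',\boldsymbol\pi)|_1\le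 S_P'|\boldsymbol\mu-\boldsymbol\mu'|_1+S_P''|\boldsymbol\mu[\mathcal X]-\boldsymbol\mu'[\mathcal X]|_1$, where $S_R'=M_R+L_R$, $S_R''=M_RL_Q+L_R(1+L_Q)$, $S_P'=1+L_P$, $S_P''=L_Q+L_P(1+L_Q)$.
   Context: $K\ge1$, $[K]=\{1,\dots,K\}$, $\mathcal X,\mathcal U$ finite, $\mathcal P(A)$ the probability distributions on $A$, $|\cdot|_1$ the $L_1$ norm, constants $M_R,L_R,L_P,L_Q>0$. Marginals: for $\boldsymbol\mu$ on $\mathcal X\times[K]$, $\boldsymbol\mu[\mathcal X](x)=\sum_k\boldsymbol\mu(x,k)$; for $\boldsymbol\nu$ on $\mathcal U\times[K]$, $\boldsymbol\nu[\mathcal U](u)=\sum_k\boldsymbol\nu(u,k)$. For each $k$: $r_k:\mathcal X\times\mathcal U\times\mathcal P(\mathcal X)\times\mathcal P(\mathcal U)\to\mathbb R$ and $P_k:\mathcal X\times\mathcal U\times\mathcal P(\mathcal X)\times\mathcal P(\mathcal U)\to\mathcal P(\mathcal X)$ with $|r_k|\le M_R$, $|r_k(x,u,\mu_1,\nu_1)-r_k(x,u,\mu_2,\nu_2)|\le L_R(|\mu_1-\mu_2|_1+|\nu_1-\nu_2|_1)$, $|P_k(x,u,\mu_1,\nu_1)-P_k(x,u,\mu_2,\nu_2)|_1\le L_P(|\mu_1-\mu_2|_1+|\nu_1-\nu_2|_1)$. Mean-field operators: $\nu^{\mathrm{MF}}(\boldsymbol\mu,\boldsymbol\pi)(u,k)=\sum_x\pi_k(x,\boldsymbol\mu[\mathcal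 X])(u)\boldsymbol\mu(x,k)$; $P^{\mathrm{MF}}(\boldsymbol\mu,\boldsymbol\pi)(x',k)=\sum_{x,u}\boldsymbol\mu(x,k)\pi_k(x,\boldsymbol\mu[\mathcal X])(u)P_k(x,u,\boldsymbol\mu[\mathcal X],\nu^{\mathrm{MF}}(\boldsymbol\mu,\boldsymbol\pi)[\mathcal U])(x')$; $r_k^{\mathrm{MF}}(\boldsymbol\mu,\boldsymbol\pi)=\sum_{x,u}\boldsymbol\mu(x,k)\pi_k(x,\boldsymbol\mu[\mathcal X])(u)r_k(x,u,\boldsymbol\mu[\mathcal X],\nu^{\mathrm{MF}}(\boldsymbol\mu,\boldsymbol\pi)[\mathcal U])$. *)

(* R is an abstract real field; X, U finite types;
   [K] is represented by 'I_K (indices 0..K-1). *)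
From mathcomp Require Import all_boot all_order all_algebra.
Set Implicit Arguments. Unset Strict Implicit. Unset Printing Implicit Defensive.
Import Order.TTheory GRing.Theory Num.Theory.
Local Open Scope ring_scope.

Section Defs.
Variable R : realFieldType.

Definition is_dist (T : finType) (p : T -> R) : Prop :=
  (forall t, 0 <= p t) /\ \sum_(t : T) p t = 1.

Definition l1dist (T : finType) (p q : T -> R) : R := \sum_(t : T) `|p t - q t|.

Variables (X U : finType) (K : nat).

Definition margX (mu : X * 'I_K -> R) : X -> R := fun x => \sum_(k < K) mu (x, k).
Definition margU (nu : U * 'I_K -> R) : U -> R := fun u => \sum_(k < K) nu (u, k).

(* pi k x m : decision rule of class k, a distribution on U *)
Definition nuMF (pi : 'I_K -> X -> (X -> R) -> U -> R) (mu : X * 'I_K -> R)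
  : U * 'I_K -> R :=
  fun uk => \sum_(x : X) pi uk.2 x (margX mu) uk.1 * mu (x, uk.2).

Definition PMF (P : 'I_K -> X -> U -> (X -> R) -> (U -> R) -> X -> R)
  (pi : 'I_K -> X -> (X -> R) -> U -> R) (mu : X * 'I_K -> R) : X * 'I_K -> R :=
  fun xk => \sum_(x : X) \sum_(u : U)
     mu (x, xk.2) * pi xk.2 x (margX mu) u *
     P xk.2 x u (margX mu) (margU (nuMF pi mu)) xk.1.

Definition rMF (r : 'I_K -> X -> U -> (X -> R) -> (U -> R) -> R)
  (pi : 'I_K -> X -> (X -> R) -> U -> R) (mu : X * 'I_K -> R) (k : 'I_K) : R :=
  \sum_(x : X) \sum_(u : U)
     mu (x, k) * pi k x (margX mu) u * r k x u (margX mu) (margU (nuMF pi mu)).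

End Defs.

(** All three mean-field quantities are read off the joint law
    [J mu ((u, k), x) = pi_k(x, mu[X])(u) mu(x, k)]: [nu^MF] is a marginal of [J],
    while [P^MF] and [r_k^MF] integrate [P_k] and [r_k] against [J].  Marginals are
    1-Lipschitz in L1, and [b a - b' a' = b (a - a') + (b - b') a'] splits every
    other difference into a change of weights, costing [|J mu - J mu'|_1] times a
    bound on the integrand, and a change of integrand at the fixed probability
    weights [J mu'], costing its Lipschitz constant.  The same splitting with
    weights [mu] and integrand [pi] gives
    [|J mu - J mu'|_1 <= |mu - mu'|_1 + L_Q |mu[X] - mu'[X]|_1]. *)
From mathcomp Require Import all_boot all_order all_algebra.
From mathcomp Require Import ring lra.
Import Order.TTheory GRing.Theory Num.Theory.
Local Open Scope ring_scope.

Set Implicit Arguments.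
Unset Strict Implicit.
Unset Printing Implicit Defensive.

Section L1Distance.
Variable R : realFieldType.

Lemma sum_pair (T I : finType) (F : T * I -> R) :
  \sum_p F p = \sum_t \sum_i F (t, i).
Proof. by rewrite pair_big; apply: eq_bigr => -[]. Qed.

Lemma sum_pairE (T I : finType) (F : T * I -> R) :
  \sum_p F p = \sum_i \sum_t F (t, i).
Proof. by rewrite sum_pair exchange_big. Qed.

Lemma is_dist_sum2 (T I : finType) (f : T * I -> R) :
  is_dist f -> is_dist (fun t => \sum_i f (t, i)).
Proof.
move=> [f_ge0 f_sum1]; split; last by rewrite -sum_pair.
by move=> t; apply: sumr_ge0.
Qed.

Lemma l1dist_sum2_le (T I : finType) (f g : T * I -> R) :
  l1dist (fun t => \sum_i f (t, i)) (fun t => \sum_i g (t, i)) <= l1dist f g.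
Proof.
rewrite [l1dist f g]/l1dist sum_pair; apply: ler_sum => t _.
by rewrite -sumrB; apply: ler_norm_sum.
Qed.

Lemma normB_mul_le (a a' b b' : R) :
  0 <= a' -> `|b * a - b' * a'| <= `|b| * `|a - a'| + `|b - b'| * a'.
Proof.
move=> a'_ge0.
have -> : b * a - b' * a' = b * (a - a') + (b - b') * a' by ring.
by apply: le_trans (ler_normD _ _) _; rewrite !normrM (ger0_norm a'_ge0).
Qed.

Lemma sum_dist_mul_le (I : finType) (w c : I -> R) (C : R) :
  is_dist w -> (forall i, c i <= C) -> \sum_i c i * w i <= C.
Proof.
move=> [w_ge0 w_sum1] c_le; rewrite -[leRHS]mulr1 -w_sum1 mulr_sumr.
by apply: ler_sum => i _; apply: ler_wpM2r.
Qed.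

Lemma sum_normB_mul_le (I : finType) (w w' c c' : I -> R) (M C : R) :
  is_dist w' -> (forall i, `|c i| <= M) -> (forall i, `|c i - c' i| <= C) ->
  \sum_i `|c i * w i - c' i * w' i| <= M * l1dist w w' + C.
Proof.
move=> w'_dist c_le dc_le; have [w'_ge0 _] := w'_dist.
apply: le_trans (ler_sum _ (fun i _ => normB_mul_le (w i) (c i) (c' i) (w'_ge0 i))) _.
rewrite big_split /= /l1dist mulr_sumr; apply: lerD.
  by apply: ler_sum => i _; rewrite ler_wpM2r.
exact: sum_dist_mul_le.
Qed.

Lemma normB_sum2_le (A B : finType) (F G : A -> B -> R) :
  `|\sum_a \sum_b F a b - \sum_a \sum_b G a b| <= \sum_a \sum_b `|F a b - G a b|.
Proof.
rewrite -sumrB; apply: le_trans (ler_norm_sum _ _ _) _.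
by apply: ler_sum => a _; rewrite -sumrB; apply: ler_norm_sum.
Qed.

Lemma l1dist_mixture_le (I T : finType) (w w' : I -> R) (q q' : I -> T -> R)
    (C : R) :
  is_dist w' -> (forall i, is_dist (q i)) -> (forall i, l1dist (q i) (q' i) <= C) ->
  \sum_i \sum_t `|q i t * w i - q' i t * w' i| <= l1dist w w' + C.
Proof.
move=> w'_dist q_dist dq_le; have [w'_ge0 _] := w'_dist.
have mix_i i : \sum_t `|q i t * w i - q' i t * w' i|
    <= `|w i - w' i| + l1dist (q i) (q' i) * w' i.
  have [q_ge0 q_sum1] := q_dist i.
  apply: le_trans (ler_sum _ (fun t _ => normB_mul_le (w i) (q i t) (q' i t) (w'_ge0 i))) _.
  rewrite big_split /= -!mulr_suml.
  by under eq_bigr => t _ do rewrite ger0_norm //; rewrite q_sum1 mul1r.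
apply: le_trans (ler_sum _ (fun i _ => mix_i i)) _.
by rewrite big_split lerD // sum_dist_mul_le.
Qed.

End L1Distance.

Section MeanField.
Variables (R : realFieldType) (X U : finType) (K : nat).
Variable pi : 'I_K -> X -> (X -> R) -> U -> R.
Hypothesis pi_dist : forall k x (m : X -> R), is_dist m -> is_dist (pi k x m).

Definition jointMF (mu : X * 'I_K -> R) : U * 'I_K * X -> R :=
  fun q => pi q.1.2 q.2 (margX mu) q.1.1 * mu (q.2, q.1.2).

Lemma sum_jointE (F : U * 'I_K * X -> R) :
  \sum_q F q = \sum_(k < K) \sum_x \sum_u F ((u, k), x).
Proof.
by rewrite sum_pairE; under eq_bigr do rewrite sum_pairE; rewrite exchange_big.
Qed.

Lemma margX_dist {mu : X * 'I_K -> R} : is_dist mu -> is_dist (margX mu).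
Proof. exact: is_dist_sum2. Qed.

Lemma jointMF_dist {mu : X * 'I_K -> R} : is_dist mu -> is_dist (jointMF mu).
Proof.
move=> mu_dist; have [mu_ge0 mu_sum1] := mu_dist.
have pi_dist_mu k x := pi_dist k x (margX_dist mu_dist).
split=> [q|].
  by apply: mulr_ge0 => //; have [] := pi_dist_mu q.1.2 q.2.
rewrite sum_jointE -mu_sum1 sum_pairE; apply: eq_bigr => k _.
apply: eq_bigr => x _; have [_ pi_sum1] := pi_dist_mu k x.
by rewrite /jointMF /= -mulr_suml pi_sum1 mul1r.
Qed.

Lemma nuMF_dist {mu : X * 'I_K -> R} : is_dist mu -> is_dist (nuMF pi mu).
Proof. move=> mu_dist; exact (is_dist_sum2 (jointMF_dist mu_dist)). Qed.

Lemma l1dist_nuMF_le (mu mu' : X * 'I_K -> R) :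
  l1dist (nuMF pi mu) (nuMF pi mu') <= l1dist (jointMF mu) (jointMF mu').
Proof. exact: (l1dist_sum2_le (jointMF mu) (jointMF mu')). Qed.

Lemma l1dist_jointMF_le (L_Q : R) (mu mu' : X * 'I_K -> R) :
    (forall k x (m1 m2 : X -> R), is_dist m1 -> is_dist m2 ->
      l1dist (pi k x m1) (pi k x m2) <= L_Q * l1dist m1 m2) ->
    is_dist mu -> is_dist mu' ->
  l1dist (jointMF mu) (jointMF mu')
    <= l1dist mu mu' + L_Q * l1dist (margX mu) (margX mu').
Proof.
move=> pi_lip mu_dist mu'_dist.
have [m_dist m'_dist] := (margX_dist mu_dist, margX_dist mu'_dist).
have := l1dist_mixture_le (q := fun p => pi p.2 p.1 (margX mu))
  (q' := fun p => pi p.2 p.1 (margX mu')) mu mu'_dist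
  (fun p => pi_dist _ _ m_dist) (fun p => pi_lip p.2 p.1 _ _ m_dist m'_dist).
by rewrite /l1dist sum_jointE sum_pairE.
Qed.

Lemma PMF_jointE (P : 'I_K -> X -> U -> (X -> R) -> (U -> R) -> X -> R)
    (mu : X * 'I_K -> R) y k :
  PMF P pi mu (y, k) = \sum_x \sum_u
    P k x u (margX mu) (margU (nuMF pi mu)) y * jointMF mu ((u, k), x).
Proof.
by apply: eq_bigr => x _; apply: eq_bigr => u _; rewrite mulrC [mu _ * _]mulrC.
Qed.

Lemma rMF_jointE (r : 'I_K -> X -> U -> (X -> R) -> (U -> R) -> R)
    (mu : X * 'I_K -> R) k :
  rMF r pi mu k = \sum_x \sum_u
    r k x u (margX mu) (margU (nuMF pi mu)) * jointMF mu ((u, k), x).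
Proof.
by apply: eq_bigr => x _; apply: eq_bigr => u _; rewrite mulrC [mu _ * _]mulrC.
Qed.

Lemma l1dist_PMF_le (L_P : R) (P : 'I_K -> X -> U -> (X -> R) -> (U -> R) -> X -> R)
    (mu mu' : X * 'I_K -> R) :
    (forall k x u (m : X -> R) (n : U -> R),
      is_dist m -> is_dist n -> is_dist (P k x u m n)) ->
    (forall k x u (m1 m2 : X -> R) (n1 n2 : U -> R),
      is_dist m1 -> is_dist m2 -> is_dist n1 -> is_dist n2 ->
      l1dist (P k x u m1 n1) (P k x u m2 n2)
        <= L_P * (l1dist m1 m2 + l1dist n1 n2)) ->
    is_dist mu -> is_dist mu' ->
  l1dist (PMF P pi mu) (PMF P pi mu')
    <= l1dist (jointMF mu) (jointMF mu') + L_P *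
       (l1dist (margX mu) (margX mu') + l1dist (margU (nuMF pi mu)) (margU (nuMF pi mu'))).
Proof.
move=> P_dist P_lip mu_dist mu'_dist.
have [m_dist m'_dist] := (margX_dist mu_dist, margX_dist mu'_dist).
have [n_dist n'_dist] := (is_dist_sum2 (nuMF_dist mu_dist), is_dist_sum2 (nuMF_dist mu'_dist)).
apply: le_trans (l1dist_mixture_le
  (q := fun q => P q.1.2 q.2 q.1.1 (margX mu) (margU (nuMF pi mu)))
  (q' := fun q => P q.1.2 q.2 q.1.1 (margX mu') (margU (nuMF pi mu')))
  (jointMF mu) (jointMF_dist mu'_dist) (fun q => P_dist _ _ _ _ _ m_dist n_dist)
  (fun q => P_lip _ _ _ _ _ _ _ m_dist m'_dist n_dist n'_dist)).
rewrite /l1dist sum_pairE sum_jointE; apply: ler_sum => k _.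
under eq_bigr => y _ do rewrite !PMF_jointE.
apply: le_trans (ler_sum _ (fun y _ => normB_sum2_le _ _)) _.
by rewrite exchange_big; under eq_bigr do rewrite exchange_big.
Qed.

Lemma sum_rMF_le (M_R L_R : R) (r : 'I_K -> X -> U -> (X -> R) -> (U -> R) -> R)
    (mu mu' : X * 'I_K -> R) :
    (forall k x u (m : X -> R) (n : U -> R),
      is_dist m -> is_dist n -> `|r k x u m n| <= M_R) ->
    (forall k x u (m1 m2 : X -> R) (n1 n2 : U -> R),
      is_dist m1 -> is_dist m2 -> is_dist n1 -> is_dist n2 ->
      `|r k x u m1 n1 - r k x u m2 n2| <= L_R * (l1dist m1 m2 + l1dist n1 n2)) ->
    is_dist mu -> is_dist mu' ->
  \sum_(k < K) `|rMF r pi mu k - rMF r pi mu' k|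
    <= M_R * l1dist (jointMF mu) (jointMF mu') + L_R *
       (l1dist (margX mu) (margX mu') + l1dist (margU (nuMF pi mu)) (margU (nuMF pi mu'))).
Proof.
move=> r_bound r_lip mu_dist mu'_dist.
have [m_dist m'_dist] := (margX_dist mu_dist, margX_dist mu'_dist).
have [n_dist n'_dist] := (is_dist_sum2 (nuMF_dist mu_dist), is_dist_sum2 (nuMF_dist mu'_dist)).
apply: le_trans (sum_normB_mul_le
  (c := fun q => r q.1.2 q.2 q.1.1 (margX mu) (margU (nuMF pi mu)))
  (c' := fun q => r q.1.2 q.2 q.1.1 (margX mu') (margU (nuMF pi mu')))
  (jointMF mu) (jointMF_dist mu'_dist) (fun q => r_bound _ _ _ _ _ m_dist n_dist)
  (fun q => r_lip _ _ _ _ _ _ _ m_dist m'_dist n_dist n'_dist)).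
rewrite sum_jointE; apply: ler_sum => k _; rewrite !rMF_jointE.
exact: normB_sum2_le.
Qed.

End MeanField.

Theorem lemma11 (R : realFieldType) (X U : finType) (K : nat) (K_pos : (0 < K)%N)
  (M_R L_R L_P L_Q : R)
  (M_R_pos : 0 < M_R) (L_R_pos : 0 < L_R) (L_P_pos : 0 < L_P) (L_Q_pos : 0 < L_Q)
  (r : 'I_K -> X -> U -> (X -> R) -> (U -> R) -> R)
  (P : 'I_K -> X -> U -> (X -> R) -> (U -> R) -> X -> R)
  (hr_bound : forall k x u (m : X -> R) (n : U -> R),
      is_dist m -> is_dist n -> `|r k x u m n| <= M_R)
  (hr_lip : forall k x u (m1 m2 : X -> R) (n1 n2 : U -> R),
      is_dist m1 -> is_dist m2 -> is_dist n1 -> is_dist n2 ->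
      `|r k x u m1 n1 - r k x u m2 n2| <= L_R * (l1dist m1 m2 + l1dist n1 n2))
  (hP_dist : forall k x u (m : X -> R) (n : U -> R),
      is_dist m -> is_dist n -> is_dist (P k x u m n))
  (hP_lip : forall k x u (m1 m2 : X -> R) (n1 n2 : U -> R),
      is_dist m1 -> is_dist m2 -> is_dist n1 -> is_dist n2 ->
      l1dist (P k x u m1 n1) (P k x u m2 n2) <= L_P * (l1dist m1 m2 + l1dist n1 n2))
  (mu mu' : X * 'I_K -> R) (hmu : is_dist mu) (hmu' : is_dist mu')
  (pi : 'I_K -> X -> (X -> R) -> U -> R)
  (hpi_dist : forall k x (m : X -> R), is_dist m -> is_dist (pi k x m))
  (hpi_lip : forall k x (m1 m2 : X -> R), is_dist m1 -> is_dist m2 ->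
      l1dist (pi k x m1) (pi k x m2) <= L_Q * l1dist m1 m2) :
  let S_R' := M_R + L_R in
  let S_R'' := M_R * L_Q + L_R * (1 + L_Q) in
  let S_P' := 1 + L_P in
  let S_P'' := L_Q + L_P * (1 + L_Q) in
  [/\ (l1dist (margU (nuMF pi mu)) (margU (nuMF pi mu'))
         <= l1dist (nuMF pi mu) (nuMF pi mu')
       /\ l1dist (nuMF pi mu) (nuMF pi mu')
         <= l1dist mu mu' + L_Q * l1dist (margX mu) (margX mu')),
      \sum_(k < K) `|rMF r pi mu k - rMF r pi mu' k|
         <= S_R' * l1dist mu mu' + S_R'' * l1dist (margX mu) (margX mu') &
      (l1dist (margX (PMF P pi mu)) (margX (PMF P pi mu'))
         <= l1dist (PMF P pi mu) (PMF P pi mu')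
       /\ l1dist (PMF P pi mu) (PMF P pi mu')
         <= S_P' * l1dist mu mu' + S_P'' * l1dist (margX mu) (margX mu'))].
Proof.
move=> S_R' S_R'' S_P' S_P''.
set a := l1dist mu mu'; set b := l1dist (margX mu) (margX mu').
set dJ := l1dist (jointMF pi mu) (jointMF pi mu').
set dnu := l1dist (nuMF pi mu) (nuMF pi mu').
set dn := l1dist (margU (nuMF pi mu)) (margU (nuMF pi mu')).
have dJ_le : dJ <= a + L_Q * b := l1dist_jointMF_le hpi_dist hpi_lip hmu hmu'.
have dnu_le : dnu <= a + L_Q * b := le_trans (l1dist_nuMF_le pi mu mu') dJ_le.
have dn_le : dn <= a + L_Q * b :=
  le_trans (l1dist_sum2_le (nuMF pi mu) (nuMF pi mu')) dnu_le.
have dr_le := sum_rMF_le hpi_dist hr_bound hr_lip hmu hmu'.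
have dP_le := l1dist_PMF_le hpi_dist hP_dist hP_lip hmu hmu'.
split; [split | | split].
- exact: l1dist_sum2_le.
- exact: dnu_le.
- apply: le_trans dr_le _.
  apply: le_trans (lerD (ler_wpM2l (ltW M_R_pos) dJ_le)
    (ler_wpM2l (ltW L_R_pos) (lerD (lexx b) dn_le))) _.
  by rewrite /S_R' /S_R''; lra.
- exact: l1dist_sum2_le.
- apply: le_trans dP_le _.
  apply: le_trans (lerD dJ_le (ler_wpM2l (ltW L_P_pos) (lerD (lexx b) dn_le))) _.
  by rewrite /S_P' /S_P''; lra.
Qed.
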